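(* Let $(X,\mathcal{A})$ be a measurable space, $f,g\in\mathcal{F}_{[0,1]}^{(X,\mathcal{A})}$ comonotone, and $\star:[0,1]^2\to[0,1]$ continuous and non-decreasing in both arguments. Let $\circledast$ be a semicopula and $\alpha,\beta,\gamma,\lambda,\upsilon,\tau\in(0,\infty)$ with $\gamma\tau\ge1$ and $\beta\upsilon\ge1$. If for all $a,b,c\in[0,1]$ \[ \big[(a\star b)^{\alpha}\circledast c\big]^{\lambda}\ \ge\ \big[(a^{\beta}\circledast c)^{\upsilon}\star b\big]\vee\big[a\star(b^{\gamma}\circledast c)^{\tau}\big], \] then for every monotone measure $m$ on $(X,\mathcal{A})$ with $m(X)=1$, \[ \big[\mathbf{I}_\circledast(m,(f\star g)^{\alpha})\big]^{\lambda}\ \ge\ \big[\mathbf{I}_\circledast(m,f^{\beta})\big]^{\upsilon}\star\big[\mathbf{I}_\circledast(m,g^{\gamma})\big]^{\tau}. \]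
   Context: A monotone measure on $(X,\mathcal{A})$ is $m:\mathcal{A}\to[0,\infty]$ with $m(\emptyset)=0$, $m(X)>0$, $m(A)\le m(B)$ for $A\subseteq B$. $\mathcal{F}_{[0,1]}^{(X,\mathcal{A})}$ is the set of $\mathcal{A}$-measurable $f:X\to[0,1]$. A semicopula is a map $\circledast:[0,1]^2\to[0,1]$, non-decreasing in both components, with neutral element $1$ and $a\circledast b\le\min(a,b)$. The seminormed integral is $\mathbf{I}_\circledast(m,f)=\sup\{t\circledast m(\{f\ge t\}) : t\in[0,1]\}$. $f,g$ are comonotone if $(f(x)-f(y))(g(x)-g(y))\ge0$ for all $x,y$. Operations on functions are pointwise. *)

From HB Require Import structures.
From mathcomp Require Import all_boot all_order all_algebra.
From mathcomp Require Import all_classical all_reals all_analysis.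
Set Implicit Arguments. Unset Strict Implicit. Unset Printing Implicit Defensive.
Import Order.TTheory GRing.Theory Num.Theory.
Import numFieldNormedType.Exports.
Local Open Scope classical_set_scope.
Local Open Scope ring_scope.

Section Defs.
Variable R : realType.

Definition unit_int (a : R) : Prop := 0 <= a <= 1.

Definition monotone_measure (d : measure_display) (X : measurableType d)
    (m : set X -> \bar R) : Prop :=
  [/\ m set0 = 0%E,
      (0 < m setT)%E,
      (forall A, (0 <= m A)%E) &
      (forall A B, measurable A -> measurable B -> A `<=` B -> (m A <= m B)%E)].

Definition F01 (d : measure_display) (X : measurableType d) (f : X -> R) : Prop :=
  measurable_fun setT f /\ forall x, unit_int (f x).

(* semicopula on [0,1]^2 (values outside [0,1]^2 are irrelevant) *)
Definition semicopula (sc : R -> R -> R) : Prop :=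
  [/\ (forall a b, unit_int a -> unit_int b -> unit_int (sc a b)),
      (forall a a' b b', unit_int a -> unit_int a' -> unit_int b -> unit_int b' ->
          a <= a' -> b <= b' -> sc a b <= sc a' b'),
      (forall a, unit_int a -> sc 1 a = a /\ sc a 1 = a) &
      (forall a b, unit_int a -> unit_int b -> sc a b <= Num.min a b)].

Definition cont_nondecr_op (st : R -> R -> R) : Prop :=
  [/\ (forall a b, unit_int a -> unit_int b -> unit_int (st a b)),
      (forall a a' b b', unit_int a -> unit_int a' -> unit_int b -> unit_int b' ->
          a <= a' -> b <= b' -> st a b <= st a' b') &
      {within [set p : R * R | unit_int p.1 /\ unit_int p.2],
        continuous (fun p : R * R => st p.1 p.2)}].

Definition comonotone (X : Type) (f g : X -> R) : Prop :=
  forall x y, 0 <= (f x - f y) * (g x - g y).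

(* The measure value is converted to a real number with [fine]; this is
   only used for measures with m(X) = 1, whose values lie in [0,1]. *)
Definition seminormed_integral (d : measure_display) (X : measurableType d)
    (sc : R -> R -> R) (m : set X -> \bar R) (f : X -> R) : R :=
  sup [set sc t (fine (m [set x | t <= f x])) | t in [set t : R | unit_int t]].

End Defs.

(** Fix levels s, t in [0,1] and put a = s^(1/β), b = t^(1/γ), so that
    {f^β ≥ s} = {f ≥ a} and {g^γ ≥ t} = {g ≥ b}.  Comonotonicity makes these
    two sets nested; say {f ≥ a} is the smaller one, of measure c.  On it
    f ⋆ g ≥ a ⋆ b, so ((a ⋆ b)^α ⊛ c)^λ ≤ I((f ⋆ g)^α)^λ, and the first half
    of the hypothesis, used with this c, bounds (s ⊛ c)^υ ⋆ b by it.  As γτ ≥ 1,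
    the second level term (t ⊛ m{g ≥ b})^τ is at most t^τ ≤ t^(1/γ) = b, so by
    monotonicity of ⋆ the pair of level terms is bounded by I((f ⋆ g)^α)^λ; the
    other nesting uses the second half of the hypothesis.  Passing to the
    suprema over s and t is legitimate because ⋆ is continuous. *)

From HB Require Import structures.
From mathcomp Require Import all_boot all_order all_algebra.
From mathcomp Require Import all_classical all_reals all_analysis.
From mathcomp Require Import lra.
Import Order.TTheory GRing.Theory Num.Theory.
Import numFieldNormedType.Exports.
Set Implicit Arguments. Unset Strict Implicit.
Local Open Scope classical_set_scope.
Local Open Scope ring_scope.

Section Powers.
Variable R : realType.
Implicit Types (a r s t x y : R).

Lemma unit_int0 : unit_int (0 : R).
Proof. by rewrite /unit_int lexx ler01. Qed.

Lemma ler_powR2 r x y : 0 < r -> 0 <= x -> 0 <= y -> (x `^ r <= y `^ r) = (x <= y).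
Proof.
move=> r0 x0 y0; apply/idP/idP.
  by apply: contraLR; rewrite -!ltNge => yx; apply: gt0_ltr_powR; rewrite ?nnegrE.
by move=> xy; apply: ge0_ler_powR => //; rewrite ?nnegrE ?ltW.
Qed.

Lemma ltr_powR2 r x y : 0 < r -> 0 <= x -> 0 <= y -> (x `^ r < y `^ r) = (x < y).
Proof. by move=> r0 x0 y0; rewrite !ltNge ler_powR2. Qed.

Lemma powRVK e s : 0 < e -> 0 <= s -> (s `^ e^-1) `^ e = s.
Proof. by move=> e0 s0; rewrite -powRrM mulVf ?gt_eqF // powRr1. Qed.

Lemma unit_int_powR a r : unit_int a -> 0 <= r -> unit_int (a `^ r).
Proof.
move=> /andP[a0 a1] r0; rewrite /unit_int powR_ge0 /=.
have -> : 1 = 1 `^ r :> R by rewrite powR1.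
by apply: ge0_ler_powR; rewrite ?nnegrE ?ler01.
Qed.

Lemma unit_ger_powR t p q : unit_int t -> 0 < p -> p <= q -> t `^ q <= t `^ p.
Proof.
move=> /andP[t0 t1] p0 pq; have [->|tn0] := eqVneq t 0.
  by rewrite !powR0 // gt_eqF // (lt_le_trans p0 pq).
by apply: ger_powR pq; rewrite t1 andbT lt_neqAle eq_sym tn0.
Qed.

Lemma sup_powR_adherent (S : set R) u e : has_sup S -> (forall y, S y -> 0 <= y) ->
  0 < u -> 0 < e -> exists2 y, S y & (sup S) `^ u - e < y `^ u.
Proof.
move=> supS S0 u0 e0; have [[y0 Sy0] _] := supS.
have P0 : 0 <= sup S := le_trans (S0 _ Sy0) (sup_upper_bound supS Sy0).
have [neg|w0] := ltrP ((sup S) `^ u - e) 0.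
  by exists y0 => //; apply: lt_le_trans neg (powR_ge0 _ _).
set z := ((sup S) `^ u - e) `^ u^-1.
have z0 : 0 <= z by exact: powR_ge0.
have zP : z < sup S by rewrite -(ltr_powR2 u0) // powRVK //; lra.
have [y Sy zy] := sup_adherent (ltac:(by rewrite subr_gt0) : 0 < sup S - z) supS.
exists y => //; rewrite -(powRVK u0 w0) -/z ltr_powR2 ?(S0 _ Sy) //.
by move: zy; rewrite opprB addrCA subrr addr0.
Qed.

End Powers.

Section UnitOperations.
Variable R : realType.
Implicit Types (st sc : R -> R -> R).

Lemma semicopula_powR_le sc t c gamma tau : semicopula sc ->
  unit_int t -> unit_int c -> 0 < gamma -> gamma^-1 <= tau ->
  (sc t c) `^ tau <= t `^ gamma^-1.
Proof.
move=> [scu _ _ scmin] ut uc g0 gt; have g0' : 0 < gamma^-1 by rewrite invr_gt0.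
have tau0 : 0 < tau := lt_le_trans g0' gt.
apply: le_trans (unit_ger_powR ut g0' gt).
have /andP[sc0 _] := scu _ _ ut uc; have /andP[t0 _] := ut.
by rewrite ler_powR2 // (le_trans (scmin _ _ ut uc)) // ge_min lexx.
Qed.

Lemma continuous_unit_square_dist st :
  {within [set p : R * R | unit_int p.1 /\ unit_int p.2],
    continuous (fun p : R * R => st p.1 p.2)} ->
  forall a b, unit_int a -> unit_int b -> forall e, 0 < e ->
  exists2 d, 0 < d & forall p q, unit_int p -> unit_int q ->
     `|a - p| < d -> `|b - q| < d -> `|st a b - st p q| < e.
Proof.
move=> cst a b ua ub e e0.
move: cst; rewrite continuous_subspace_in => /(_ (a, b)).
rewrite in_setE => /(_ (conj ua ub)) /cvgrPdist_lt /(_ e e0).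
move=> /nbhs_ballP [d d0 Hd]; exists d => // p q up uq ap bq.
apply: (Hd (p, q)); rewrite /ball /= /subspace_ball ifT; last by rewrite in_setE.
by split.
Qed.

Lemma continuous_le_of_approx st x y K :
  {within [set p : R * R | unit_int p.1 /\ unit_int p.2],
    continuous (fun p : R * R => st p.1 p.2)} ->
  unit_int x -> unit_int y ->
  (forall e, 0 < e -> exists p q,
     [/\ unit_int p, unit_int q, `|x - p| < e, `|y - q| < e & st p q <= K]) ->
  st x y <= K.
Proof.
move=> cst ux uy approx; rewrite leNgt; apply/negP => Klt.
have [d d0 near_xy] := continuous_unit_square_dist cst ux uy
  (ltac:(by rewrite subr_gt0) : 0 < st x y - K).
have [p [q [up uq xp yq pqK]]] := approx d d0.
by move: (near_xy _ _ up uq xp yq); rewrite ltr_norml => /andP[_]; lra.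
Qed.

End UnitOperations.

Section Measurability.
Variables (R : realType) (d : measure_display) (X : measurableType d).
Implicit Types (f g h : X -> R).

Lemma measurable_fun_ge f : measurable_fun setT f -> forall c, measurable [set x | c <= f x].
Proof.
move=> mf c; rewrite (_ : [set x | _] = setT `&` f @^-1` `[c, +oo[%classic).
  exact: mf (measurable_itv _).
by apply/seteqP; split => x /=; rewrite in_itv /= andbT //; move=> [].
Qed.

Lemma measurable_ge_of_gt h : (forall w, measurable [set x | w < h x]) ->
  forall v, measurable [set x | v <= h x].
Proof.
move=> mh v.
rewrite (_ : [set x | _] = \bigcap_n [set x | v - n.+1%:R^-1 < h x]).
  exact: bigcapT_measurable.
apply/seteqP; split => x /=.
  by move=> vh n _ /=; apply: lt_le_trans vh; rewrite ltrBlDr ltrDl invr_gt0 ltr0n.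
move=> vh; apply/ler_addgt0Pr => e e0.
have [N _ /(_ N (leqnn N)) Ne] := near_infty_natSinv_lt (PosNum e0).
rewrite -lerBlDr; apply/ltW/(le_lt_trans _ (vh N I)).
by rewrite lerB // ltW.
Qed.

Lemma ratr_unit_approx (a e : R) : unit_int a -> 0 < e ->
  exists r : rat, [/\ unit_int (ratr r : R), ratr r <= a & a - ratr r < e].
Proof.
move=> /andP[a0 a1] e0; have [->|an0] := eqVneq a 0.
  by exists 0%R; rewrite rmorph0 subr0; split => //; exact: unit_int0.
have ap : 0 < a by rewrite lt_neqAle eq_sym an0.
have lo_a : Num.max 0 (a - e) < a by rewrite gt_max ap /= ltrBlDr ltrDl.
have [q] := rat_in_itvoo lo_a.
rewrite in_itv /= gt_max => /andP[/andP[q0 qae] qa].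
exists q; split; last by rewrite ltrBlDr -ltrBlDl.
  by rewrite /unit_int (ltW q0) (ltW (lt_le_trans qa a1)).
exact: ltW.
Qed.

Lemma measurable_op_gt f g st : F01 f -> F01 g -> cont_nondecr_op st ->
  forall w, measurable [set x | w < st (f x) (g x)].
Proof.
move=> [mf uf] [mg ug] [_ stm stc] w.
(* By continuity and monotonicity of st, w < st (f x) (g x) iff w < st r r' for
   some rational point (r, r') of the unit square below (f x, g x). *)
have mP (P : Prop) : measurable [set _ : X | P].
  by case: (pselect P) => p;
    [rewrite (_ : [set _ | P] = setT) | rewrite (_ : [set _ | P] = set0)]; rewrite ?predeqE.
rewrite (_ : [set x | _] = \bigcup_(r : rat) \bigcup_(r' : rat)
    ([set _ | [/\ unit_int (ratr r : R), unit_int (ratr r' : R) & w < st (ratr r) (ratr r')]]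
     `&` ([set x | ratr r <= f x] `&` [set x | ratr r' <= g x]))).
  apply: bigcupT_measurable_rat => r; apply: bigcupT_measurable_rat => r'.
  by apply: measurableI; [exact: mP | apply: measurableI; exact: measurable_fun_ge].
apply/seteqP; split => x /=; last first.
  move=> [r _ [r' _ [[ur ur' wr] [rf rg]]]].
  exact: lt_le_trans wr (stm _ _ _ _ ur (uf x) ur' (ug x) rf rg).
move=> wx; have [e e0 near_fg] := continuous_unit_square_dist stc (uf x) (ug x)
  (ltac:(by rewrite subr_gt0) : 0 < st (f x) (g x) - w).
have [r [ur rf fr]] := ratr_unit_approx (uf x) e0.
have [r' [ur' rg gr]] := ratr_unit_approx (ug x) e0.
exists r => //; exists r' => //; split => //; split => //.
have fr' : `|f x - ratr r| < e by rewrite ger0_norm ?subr_ge0.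
have gr' : `|g x - ratr r'| < e by rewrite ger0_norm ?subr_ge0.
have := near_fg _ _ ur ur' fr' gr'.
by rewrite ltr_norml => /andP[_]; lra.
Qed.

End Measurability.

Section LevelSets.
Variables (R : realType) (d : measure_display) (X : measurableType d).

Lemma powR_level_set (k : X -> R) e t : 0 < e -> 0 <= t -> (forall x, 0 <= k x) ->
  [set x | t <= k x `^ e] = [set x | t `^ e^-1 <= k x].
Proof.
move=> e0 t0 k0; apply/seteqP; split => x /=.
  by rewrite -{1}(powRVK e0 t0) ler_powR2 ?powR_ge0.
by rewrite -{2}(powRVK e0 t0) ler_powR2 ?powR_ge0.
Qed.

Lemma comonotone_level_sets_nested (f g : X -> R) a b : comonotone f g ->
  [set x | a <= f x] `<=` [set x | b <= g x] \/ [set x | b <= g x] `<=` [set x | a <= f x].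
Proof.
move=> co; have [[x [fx gx]]|nex] := pselect (exists x, a <= f x /\ ~ (b <= g x)).
  right => y /= gy; have gxy : g x < g y by apply: lt_le_trans gy; rewrite ltNge; apply/negP.
  by apply: (le_trans fx); have := co x y; nra.
by left => x /= fx; apply: contrapT => gx; apply: nex; exists x.
Qed.

Lemma measurable_powR_level_set (k : X -> R) e : 0 < e -> (forall x, 0 <= k x) ->
  (forall c, measurable [set x | c <= k x]) ->
  forall t, unit_int t -> measurable [set x | t <= k x `^ e].
Proof. by move=> e0 k0 mk t /andP[t0 _]; rewrite powR_level_set. Qed.

End LevelSets.

Section SeminormedIntegral.
Variables (R : realType) (d : measure_display) (X : measurableType d).
Variables (sc : R -> R -> R) (m : set X -> \bar R).
Hypotheses (scs : semicopula sc) (mm : monotone_measure m) (mT : m setT = 1%E).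

Lemma fine_measureK A : measurable A -> m A = (fine (m A))%:E.
Proof.
case: mm => _ _ m0 mmon mA; have := mmon _ _ mA measurableT (@subsetT _ A).
by rewrite mT; have := m0 A; case: (m A).
Qed.

Lemma unit_int_fine_measure A : measurable A -> unit_int (fine (m A)).
Proof.
case: mm => _ _ m0 mmon mA; have := mmon _ _ mA measurableT (@subsetT _ A).
by rewrite mT /unit_int; have := m0 A; case: (m A) => //= r; rewrite !lee_fin => -> ->.
Qed.

Lemma le_fine_measure A B : measurable A -> measurable B -> A `<=` B ->
  fine (m A) <= fine (m B).
Proof.
move=> mA mB AB; rewrite -lee_fin -fine_measureK // -fine_measureK //.
by case: mm => _ _ _ mmon; exact: mmon.
Qed.

Variable k : X -> R.
Hypothesis mk : forall t, unit_int t -> measurable [set x | t <= k x].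

Let S := [set sc t (fine (m [set x | t <= k x])) | t in [set t : R | unit_int t]].

Let unit_int_S y : S y -> unit_int y.
Proof.
by case: scs => scu _ _ _ [t ut <-]; apply: scu => //; exact/unit_int_fine_measure/mk.
Qed.

Let has_sup_S : has_sup S.
Proof.
split; last by exists 1 => y /unit_int_S /andP[].
by exists (sc 0 (fine (m [set x | 0 <= k x]))); exists 0 => //; exact: unit_int0.
Qed.

Lemma unit_int_seminormed_integral : unit_int (seminormed_integral sc m k).
Proof.
rewrite /seminormed_integral -/S; have [[y Sy] _] := has_sup_S.
apply/andP; split; last by apply: ge_sup; [exists y | move=> z /unit_int_S /andP[]].
by apply: le_trans (sup_upper_bound has_sup_S Sy); case/andP: (unit_int_S Sy).
Qed.

Lemma le_seminormed_integral u A : unit_int u -> measurable A ->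
  A `<=` [set x | u <= k x] -> sc u (fine (m A)) <= seminormed_integral sc m k.
Proof.
case: scs => _ scm _ _ uu mA Ak; rewrite /seminormed_integral -/S.
apply: le_trans (sup_upper_bound has_sup_S (ex_intro2 _ _ u uu erefl)).
by apply: scm => //; [exact: unit_int_fine_measure | exact/unit_int_fine_measure/mk |
  exact: le_fine_measure (mk uu) Ak].
Qed.

Lemma seminormed_integral_powR_approx u e : 0 < u -> 0 < e -> exists t, unit_int t /\
  `|(seminormed_integral sc m k) `^ u - (sc t (fine (m [set x | t <= k x]))) `^ u| < e.
Proof.
move=> u0 e0; have S0 y : S y -> 0 <= y by case/unit_int_S/andP.
have [_ [t ut <-] lt_e] := sup_powR_adherent has_sup_S S0 u0 e0.
exists t; split => //; rewrite ger0_norm; first by rewrite ltrBlDr -ltrBlDl.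
have /andP[sc0 _] := unit_int_S (ex_intro2 _ _ t ut erefl).
rewrite subr_ge0 ler_powR2 ?powR_ge0 //; last by case/andP: unit_int_seminormed_integral.
by apply: le_seminormed_integral => //; exact: mk.
Qed.

End SeminormedIntegral.

Section Corollary.
Variables (R : realType) (d : measure_display) (X : measurableType d).
Variables (f g : X -> R) (star sc : R -> R -> R) (m : set X -> \bar R).
Variables (alpha beta gamma lambda upsilon tau : R).
Hypotheses (Ff : F01 f) (Fg : F01 g) (fg : comonotone f g).
Hypotheses (stars : cont_nondecr_op star) (scs : semicopula sc).
Hypotheses (mm : monotone_measure m) (mT : m setT = 1%E).
Hypotheses (alpha0 : 0 < alpha) (beta0 : 0 < beta) (gamma0 : 0 < gamma).
Hypotheses (lambda0 : 0 < lambda) (upsilon0 : 0 < upsilon) (tau0 : 0 < tau).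
Hypotheses (gamma_tau : 1 <= gamma * tau) (beta_upsilon : 1 <= beta * upsilon).
Hypothesis star_sc : forall a b c : R, unit_int a -> unit_int b -> unit_int c ->
  Num.max (star ((sc (a `^ beta) c) `^ upsilon) b) (star a ((sc (b `^ gamma) c) `^ tau))
  <= (sc ((star a b) `^ alpha) c) `^ lambda.

Let h x := star (f x) (g x) `^ alpha.

Lemma star_level_terms_le_integral s t : unit_int s -> unit_int t ->
  star ((sc s (fine (m [set x | s <= f x `^ beta]))) `^ upsilon)
       ((sc t (fine (m [set x | t <= g x `^ gamma]))) `^ tau)
  <= (seminormed_integral sc m h) `^ lambda.
Proof.
have [mf uf] := Ff; have [mg ug] := Fg; have [stu stm _] := stars.
have [scu _ _ _] := scs.
have f0 x : 0 <= f x by case/andP: (uf x).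
have g0 x : 0 <= g x by case/andP: (ug x).
have mh : forall u, unit_int u -> measurable [set x | u <= h x].
  apply: measurable_powR_level_set => // [x|]; first by case/andP: (stu _ _ (uf x) (ug x)).
  by apply: measurable_ge_of_gt; exact: measurable_op_gt.
move=> us ut; have /andP[s0 _] := us; have /andP[t0 _] := ut.
rewrite !powR_level_set //.
set a := s `^ beta^-1; set b := t `^ gamma^-1.
have ua : unit_int a by apply: unit_int_powR; rewrite // invr_ge0 ltW.
have ub : unit_int b by apply: unit_int_powR; rewrite // invr_ge0 ltW.
have mFa := measurable_fun_ge mf a; have mGb := measurable_fun_ge mg b.
set cF := fine (m [set x | a <= f x]); set cG := fine (m [set x | b <= g x]).
have ucF : unit_int cF := unit_int_fine_measure mm mT mFa.
have ucG : unit_int cG := unit_int_fine_measure mm mT mGb.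
have /andP[uab0 _] : unit_int (star a b) by exact: stu.
have uu := unit_int_powR (stu _ _ ua ub) (ltW alpha0).
have le_I A : measurable A -> unit_int (fine (m A)) ->
    (forall x, A x -> star a b <= star (f x) (g x)) ->
    (sc (star a b `^ alpha) (fine (m A))) `^ lambda <= (seminormed_integral sc m h) `^ lambda.
  move=> mA uA Ah; have /andP[sc0 _] := scu _ _ uu uA.
  rewrite ler_powR2 //; last by case/andP: (unit_int_seminormed_integral scs mm mT mh).
  apply: le_seminormed_integral => // x /Ah.
  by rewrite /h /= ler_powR2 //; case/andP: (stu _ _ (uf x) (ug x)).
have usc_u := unit_int_powR (scu _ _ us ucF) (ltW upsilon0).
have usc_t := unit_int_powR (scu _ _ ut ucG) (ltW tau0).
case: (comonotone_level_sets_nested a b fg) => [FG|GF].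
- have := star_sc ua ub ucF; rewrite ge_max (powRVK beta0 s0) => /andP[le_F _].
  apply: le_trans (le_trans le_F (le_I _ mFa ucF _)) => [|x Fx]; last first.
    exact: stm _ _ _ _ ua (uf x) ub (ug x) Fx (FG x Fx).
  apply: stm => //; apply: semicopula_powR_le => //.
  by rewrite -(ler_pM2l gamma0) mulfV ?gt_eqF.
- have := star_sc ua ub ucG; rewrite ge_max (powRVK gamma0 t0) => /andP[_ le_G].
  apply: le_trans (le_trans le_G (le_I _ mGb ucG _)) => [|x Gx]; last first.
    exact: stm _ _ _ _ ua (uf x) ub (ug x) (GF x Gx) Gx.
  apply: stm => //; apply: semicopula_powR_le => //.
  by rewrite -(ler_pM2l beta0) mulfV ?gt_eqF.
Qed.

End Corollary.

Theorem corollary3p13 (R : realType) (d : measure_display) (X : measurableType d)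
    (f g : X -> R) (star sc : R -> R -> R)
    (alpha beta gamma lambda upsilon tau : R) :
  F01 f -> F01 g -> comonotone f g ->
  cont_nondecr_op star -> semicopula sc ->
  0 < alpha -> 0 < beta -> 0 < gamma -> 0 < lambda -> 0 < upsilon -> 0 < tau ->
  1 <= gamma * tau -> 1 <= beta * upsilon ->
  (forall a b c : R, unit_int a -> unit_int b -> unit_int c ->
     Num.max (star ((sc (a `^ beta) c) `^ upsilon) b)
             (star a ((sc (b `^ gamma) c) `^ tau))
     <= (sc ((star a b) `^ alpha) c) `^ lambda) ->
  forall m : set X -> \bar R, monotone_measure m -> m setT = 1%E ->
    star ((seminormed_integral sc m (fun x => f x `^ beta)) `^ upsilon)
         ((seminormed_integral sc m (fun x => g x `^ gamma)) `^ tau)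
    <= (seminormed_integral sc m (fun x => (star (f x) (g x)) `^ alpha)) `^ lambda.
Proof.
move=> Ff Fg fg stars scs alpha0 beta0 gamma0 lambda0 upsilon0 tau0 gamma_tau beta_upsilon
  star_sc m mm mT.
have key := star_level_terms_le_integral Ff Fg fg stars scs mm mT
  alpha0 beta0 gamma0 lambda0 upsilon0 tau0 gamma_tau beta_upsilon star_sc.
have [[mf uf] [mg ug]] := (Ff, Fg); have [scu _ _ _] := scs; have [_ _ star_cont] := stars.
have mF : forall t, unit_int t -> measurable [set x | t <= f x `^ beta].
  apply: measurable_powR_level_set => // [x|]; [by case/andP: (uf x) | exact: measurable_fun_ge].
have mG : forall t, unit_int t -> measurable [set x | t <= g x `^ gamma].
  apply: measurable_powR_level_set => // [x|]; [by case/andP: (ug x) | exact: measurable_fun_ge].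
apply: continuous_le_of_approx star_cont _ _ _.
- exact: unit_int_powR (unit_int_seminormed_integral scs mm mT mF) (ltW upsilon0).
- exact: unit_int_powR (unit_int_seminormed_integral scs mm mT mG) (ltW tau0).
move=> e e0.
have [s [us near_s]] := seminormed_integral_powR_approx scs mm mT mF upsilon0 e0.
have [t [ut near_t]] := seminormed_integral_powR_approx scs mm mT mG tau0 e0.
exists ((sc s (fine (m [set x | s <= f x `^ beta]))) `^ upsilon).
exists ((sc t (fine (m [set x | t <= g x `^ gamma]))) `^ tau).
split; [| | exact: near_s | exact: near_t | exact: key].
- apply: unit_int_powR (ltW upsilon0); apply: scu => //; exact: unit_int_fine_measure (mF _ us).
- apply: unit_int_powR (ltW tau0); apply: scu => //; exact: unit_int_fine_measure (mG _ ut).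
Qed.
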